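(* Let $\tau:\mathbb{Z}^3\to\mathbb{C}\setminus\{0\}$, $(k,l,m)\mapsto\tau_{k,l,m}$, be arbitrary, and at a point $(k,l,m)$ write $\tau[a,b,c]:=\tau_{k+a,l+b,m+c}$. Define the row vectors $$V=\big(\tau[0,1,1]\tau[1,0,0],\ \tau[1,0,1]\tau[0,1,0],\ \tau[1,1,0]\tau[0,0,1]\big),\qquad W=(W_1,W_2,W_3,W_4),$$ with $W_1=\frac{\tau[-1,1,1]}{\tau[0,1,1]\tau[0,1,0]\tau[0,0,1]}-\frac{\tau[2,0,0]}{\tau[1,0,0]\tau[1,1,0]\tau[1,0,1]}$, $W_2=\frac{\tau[1,-1,1]}{\tau[1,0,1]\tau[1,0,0]\tau[0,0,1]}-\frac{\tau[0,2,0]}{\tau[0,1,0]\tau[0,1,1]\tau[1,1,0]}$, $W_3=\frac{\tau[1,1,-1]}{\tau[1,1,0]\tau[1,0,0]\tau[0,1,0]}-\frac{\tau[0,0,2]}{\tau[0,0,1]\tau[1,0,1]\tau[0,1,1]}$, $W_4=\frac{\tau[0,0,0]}{\tau[1,0,0]\tau[0,1,0]\tau[0,0,1]}-\frac{\tau[1,1,1]}{\tau[1,1,0]\tau[0,1,1]\tau[1,0,1]}$, and the $3\times 4$ matrices $P,Q,R$ (functions of $(k,l,m)$) by $$P=\begin{pmatrix}-\frac{\tau[1,0,0]\tau[-1,1,1]}{\tau[0,1,0]\tau[0,0,1]}&0&0&-\frac{\tau[0,0,0]\tau[0,1,1]}{\tau[0,1,0]\tau[0,0,1]}\\ -\frac{\tau[1,0,0]\tau[-1,1,0]}{\tau[0,1,0]\tau[0,0,0]}&0&\frac{\tau[0,0,1]\tau[0,1,-1]}{\tau[0,1,0]\tau[0,0,0]}&0\\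 -\frac{\tau[1,0,0]\tau[-1,0,1]}{\tau[0,0,1]\tau[0,0,0]}&\frac{\tau[0,1,0]\tau[0,-1,1]}{\tau[0,0,1]\tau[0,0,0]}&0&0\end{pmatrix},$$ $$Q=\begin{pmatrix}0&-\frac{\tau[0,1,0]\tau[1,-1,0]}{\tau[1,0,0]\tau[0,0,0]}&\frac{\tau[0,0,1]\tau[1,0,-1]}{\tau[1,0,0]\tau[0,0,0]}&0\\ 0&-\frac{\tau[0,1,0]\tau[1,-1,1]}{\tau[1,0,0]\tau[0,0,1]}&0&-\frac{\tau[0,0,0]\tau[1,0,1]}{\tau[1,0,0]\tau[0,0,1]}\\ \frac{\tau[1,0,0]\tau[-1,0,1]}{\tau[0,0,1]\tau[0,0,0]}&-\frac{\tau[0,1,0]\tau[0,-1,1]}{\tau[0,0,1]\tau[0,0,0]}&0&0\end{pmatrix},$$ $$R=\begin{pmatrix}0&\frac{\tau[0,1,0]\tau[1,-1,0]}{\tau[1,0,0]\tau[0,0,0]}&-\frac{\tau[0,0,1]\tau[1,0,-1]}{\tau[1,0,0]\tau[0,0,0]}&0\\ \frac{\tau[1,0,0]\tau[-1,1,0]}{\tau[0,1,0]\tau[0,0,0]}&0&-\frac{\tau[0,0,1]\tau[0,1,-1]}{\tau[0,1,0]\tau[0,0,0]}&0\\ 0&0&-\frac{\tau[0,0,1]\tau[1,1,-1]}{\tau[1,0,0]\tau[0,1,0]}&-\frac{\tau[1,1,0]\tau[0,0,0]}{\tau[1,0,0]\tau[0,1,0]}\end{pmatrix}.$$ Then at every $(k,l,m)\in\mathbb{Z}^3$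 the matrix identity $$P_{k+1,l,m}-P_{k,l,m}+Q_{k,l+1,m}-Q_{k,l,m}+R_{k,l,m+1}-R_{k,l,m}=V^{T}W$$ holds. Consequently: for constants $X=(A,B,C)$, premultiplying by $X$ gives four conservation laws (one per column) whose right-hand sides are multiples of $XV^T=A\tau[1,0,0]\tau[0,1,1]+B\tau[0,1,0]\tau[1,0,1]+C\tau[0,0,1]\tau[1,1,0]$, so they hold on every solution of the lattice AKP equation $XV^T=0$; and for constants $\omega=(a_1,a_2,a_3,a_4)$, postmultiplying by $\omega^T$ gives three conservation laws (one per row) whose right-hand sides are multiples of $W\omega^T$, where the equation $W\omega^T=0$ is equivalent (for nonvanishing $\tau$) to the dual AKP equation $$\begin{aligned}0=&\,a_1\big(\tau[-1,1,1]\tau[1,0,0]\tau[1,0,1]\tau[1,1,0]-\tau[0,0,1]\tau[0,1,0]\tau[0,1,1]\tau[2,0,0]\big)\\&+a_2\big(\tau[0,1,0]\tau[0,1,1]\tau[1,-1,1]\tau[1,1,0]-\tau[0,0,1]\tau[0,2,0]\tau[1,0,0]\tau[1,0,1]\big)\\&+a_3\big(\tau[0,0,1]\tau[0,1,1]\tau[1,0,1]\tau[1,1,-1]-\tau[0,0,2]\tau[0,1,0]\tau[1,0,0]\tau[1,1,0]\big)\\&+a_4\big(\tau[0,0,0]\tau[0,1,1]\tau[1,0,1]\tau[1,1,0]-\tau[0,0,1]\tau[0,1,0]\tau[1,0,0]\tau[1,1,1]\big).\end{aligned}$$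
   Context: A conservation law for a 3D lattice equation $E=0$ is an identity $\tilde{P}-P+\hat{Q}-Q+\dot{R}-R=E\Lambda$, where tilde, hat and dot denote forward shifts in $k$, $l$, $m$ respectively, so that the left-hand side vanishes on solutions of $E=0$. All quantities are evaluated at a lattice point $(k,l,m)$ using the notation $\tau[a,b,c]=\tau_{k+a,l+b,m+c}$; the subscripts on $P,Q,R$ in the identity indicate the lattice point at which these matrices are evaluated. *)

From HB Require Import structures.
From mathcomp Require Import all_boot all_order all_algebra.
Set Implicit Arguments. Unset Strict Implicit. Unset Printing Implicit Defensive.
Import Order.TTheory GRing.Theory Num.Theory.
Local Open Scope ring_scope.

Definition sh {C : Type} (tau : int -> int -> int -> C) (k l m : int)
  (a b c : int) : C := tau (k + a) (l + b) (m + c).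

Definition mx34 {C : numClosedFieldType} (r1 r2 r3 : seq C) : 'M[C]_(3,4) :=
  \matrix_(i < 3, j < 4) nth 0 (nth [::] [:: r1; r2; r3] i) j.

Section Defs.
Variable C : numClosedFieldType.
Variable tau : int -> int -> int -> C.

Definition Vv (k l m : int) : 'rV[C]_3 :=
  let t := sh tau k l m in
  \row_(i < 3) nth 0 [:: t 0 1 1 * t 1 0 0; t 1 0 1 * t 0 1 0;
                         t 1 1 0 * t 0 0 1] i.

Definition Wv (k l m : int) : 'rV[C]_4 :=
  let t := sh tau k l m in
  \row_(j < 4) nth 0
    [:: t (-1) 1 1 / (t 0 1 1 * t 0 1 0 * t 0 0 1)
          - t 2 0 0 / (t 1 0 0 * t 1 1 0 * t 1 0 1);
        t 1 (-1) 1 / (t 1 0 1 * t 1 0 0 * t 0 0 1)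
          - t 0 2 0 / (t 0 1 0 * t 0 1 1 * t 1 1 0);
        t 1 1 (-1) / (t 1 1 0 * t 1 0 0 * t 0 1 0)
          - t 0 0 2 / (t 0 0 1 * t 1 0 1 * t 0 1 1);
        t 0 0 0 / (t 1 0 0 * t 0 1 0 * t 0 0 1)
          - t 1 1 1 / (t 1 1 0 * t 0 1 1 * t 1 0 1)] j.

Definition Pm (k l m : int) : 'M[C]_(3,4) :=
  let t := sh tau k l m in
  mx34
    [:: - (t 1 0 0 * t (-1) 1 1) / (t 0 1 0 * t 0 0 1); 0; 0;
        - (t 0 0 0 * t 0 1 1) / (t 0 1 0 * t 0 0 1)]
    [:: - (t 1 0 0 * t (-1) 1 0) / (t 0 1 0 * t 0 0 0); 0;
        (t 0 0 1 * t 0 1 (-1)) / (t 0 1 0 * t 0 0 0); 0]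
    [:: - (t 1 0 0 * t (-1) 0 1) / (t 0 0 1 * t 0 0 0);
        (t 0 1 0 * t 0 (-1) 1) / (t 0 0 1 * t 0 0 0); 0; 0].

Definition Qm (k l m : int) : 'M[C]_(3,4) :=
  let t := sh tau k l m in
  mx34
    [:: 0; - (t 0 1 0 * t 1 (-1) 0) / (t 1 0 0 * t 0 0 0);
        (t 0 0 1 * t 1 0 (-1)) / (t 1 0 0 * t 0 0 0); 0]
    [:: 0; - (t 0 1 0 * t 1 (-1) 1) / (t 1 0 0 * t 0 0 1); 0;
        - (t 0 0 0 * t 1 0 1) / (t 1 0 0 * t 0 0 1)]
    [:: (t 1 0 0 * t (-1) 0 1) / (t 0 0 1 * t 0 0 0);
        - (t 0 1 0 * t 0 (-1) 1) / (t 0 0 1 * t 0 0 0); 0; 0].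

Definition Rm (k l m : int) : 'M[C]_(3,4) :=
  let t := sh tau k l m in
  mx34
    [:: 0; (t 0 1 0 * t 1 (-1) 0) / (t 1 0 0 * t 0 0 0);
        - (t 0 0 1 * t 1 0 (-1)) / (t 1 0 0 * t 0 0 0); 0]
    [:: (t 1 0 0 * t (-1) 1 0) / (t 0 1 0 * t 0 0 0); 0;
        - (t 0 0 1 * t 0 1 (-1)) / (t 0 1 0 * t 0 0 0); 0]
    [:: 0; 0; - (t 0 0 1 * t 1 1 (-1)) / (t 1 0 0 * t 0 1 0);
        - (t 1 1 0 * t 0 0 0) / (t 1 0 0 * t 0 1 0)].

Definition divPQR (k l m : int) : 'M[C]_(3,4) :=
  Pm (k + 1) l m - Pm k l m + Qm k (l + 1) m - Qm k l m
  + Rm k l (m + 1) - Rm k l m.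

Definition dualAKP (a : 'rV[C]_4) (k l m : int) : C :=
  let t := sh tau k l m in
    a 0 0 * (t (-1) 1 1 * t 1 0 0 * t 1 0 1 * t 1 1 0
             - t 0 0 1 * t 0 1 0 * t 0 1 1 * t 2 0 0)
  + a 0 1 * (t 0 1 0 * t 0 1 1 * t 1 (-1) 1 * t 1 1 0
             - t 0 0 1 * t 0 2 0 * t 1 0 0 * t 1 0 1)
  + a 0 2 * (t 0 0 1 * t 0 1 1 * t 1 0 1 * t 1 1 (-1)
             - t 0 0 2 * t 0 1 0 * t 1 0 0 * t 1 1 0)
  + a 0 3 * (t 0 0 0 * t 0 1 1 * t 1 0 1 * t 1 1 0
             - t 0 0 1 * t 0 1 0 * t 1 0 0 * t 1 1 1).

End Defs.

From HB Require Import structures.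
From mathcomp Require Import all_boot all_order all_algebra.
From mathcomp Require Import ring.
Import Order.TTheory GRing.Theory Num.Theory.
Local Open Scope ring_scope.

(* Shifting P, Q and R back to the base point (k,l,m) turns both sides of the
   matrix identity into rational functions of the values tau[a,b,c] near that
   point, and each of the twelve entries is an identity of rational functions,
   checked by clearing denominators. *)

Section Shifts.
Variables (T : Type) (tau : int -> int -> int -> T) (k l m a b c : int).

Lemma sh_shift_k : sh tau (k + 1) l m a b c = sh tau k l m (1 + a) b c.
Proof. by rewrite /sh addrA. Qed.

Lemma sh_shift_l : sh tau k (l + 1) m a b c = sh tau k l m a (1 + b) c.
Proof. by rewrite /sh addrA. Qed.

Lemma sh_shift_m : sh tau k l (m + 1) a b c = sh tau k l m a b (1 + c).
Proof. by rewrite /sh addrA. Qed.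

End Shifts.

Lemma mulmx_tr_row4 (R : pzSemiRingType) (u v : 'rV[R]_4) :
  (u *m v^T) 0 0 = u 0 0 * v 0 0 + u 0 1 * v 0 1 + u 0 2 * v 0 2 + u 0 3 * v 0 3.
Proof.
rewrite mxE !big_ord_recl big_ord0 addr0 !mxE !addrA.
by congr (_ + _ + _ + _); congr (_ * _); congr (_ _ _); apply: val_inj.
Qed.

Section ConservationLaws.
Context {C : numClosedFieldType} {tau : int -> int -> int -> C}.
Hypothesis tau_neq0 : forall k l m, tau k l m != 0.
Variables k l m : int.

Lemma sh_neq0 a b c : sh tau k l m a b c != 0.
Proof. exact: tau_neq0. Qed.

Lemma divPQR_outer : divPQR tau k l m = (Vv tau k l m)^T *m Wv tau k l m.
Proof.
rewrite /divPQR /Pm /Qm /Rm /Vv /Wv !sh_shift_k !sh_shift_l !sh_shift_m /=.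
move: (sh tau k l m) sh_neq0 => t t_neq0.
apply/matrixP => i j; rewrite !mxE big_ord1 !mxE.
case: i => [[|[|[|i]]] lti] //; case: j => [[|[|[|[|j]]]] ltj] //=;
  by field; rewrite ?mulf_neq0 ?t_neq0.
Qed.

Lemma dualAKP_Wv_mul (om : 'rV[C]_4) :
  let t := sh tau k l m in
  dualAKP tau om k l m
  = t 1 0 0 * t 0 1 0 * t 0 0 1 * t 1 1 0 * t 0 1 1 * t 1 0 1
    * (Wv tau k l m *m om^T) 0 0.
Proof.
rewrite /dualAKP mulmx_tr_row4 /Wv !mxE /=.
move: (sh tau k l m) sh_neq0 => t t_neq0.
by field; rewrite ?mulf_neq0 ?t_neq0.
Qed.

Lemma Wv_mul_eq0 (om : 'rV[C]_4) :
  (Wv tau k l m *m om^T) 0 0 = 0 <-> dualAKP tau om k l m = 0.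
Proof.
rewrite dualAKP_Wv_mul /=; set D := (X in X * _).
have D_neq0 : D != 0 by rewrite /D !mulf_neq0 ?sh_neq0.
by split=> [-> | /eqP]; rewrite ?mulr0 // mulf_eq0 (negbTE D_neq0) => /eqP.
Qed.

End ConservationLaws.

Theorem mainTheorem1 (C : numClosedFieldType) (tau : int -> int -> int -> C)
  (htau : forall k l m : int, tau k l m != 0) :
  (forall k l m : int, divPQR tau k l m = (Vv tau k l m)^T *m Wv tau k l m)
  /\ (forall (X : 'rV[C]_3) (k l m : int),
        X *m divPQR tau k l m = (X *m (Vv tau k l m)^T) *m Wv tau k l m)
  /\ (forall (om : 'rV[C]_4) (k l m : int),
        divPQR tau k l m *m om^T = (Vv tau k l m)^T *m (Wv tau k l m *m om^T))
  /\ (forall (om : 'rV[C]_4) (k l m : int),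
        (Wv tau k l m *m om^T) 0 0 = 0 <-> dualAKP tau om k l m = 0).
Proof.
split; first exact: divPQR_outer htau.
split; first by move=> X k l m; rewrite (divPQR_outer htau) mulmxA.
split; first by move=> om k l m; rewrite (divPQR_outer htau) mulmxA.
by move=> om k l m; apply: (Wv_mul_eq0 htau).
Qed.
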